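(* Let $(G,\mathcal{P})$ and $(H,\mathcal{Q})$ be group pairs. If $(G,\mathcal{P})$ is a quasi-retract of $(H,\mathcal{Q})$ and $(H,\mathcal{Q})$ is relatively finitely presented, then $(G,\mathcal{P})$ is relatively finitely presented.
   Context: A group pair $(G,\mathcal{P})$ consists of a finitely generated group $G$ and a non-empty finite collection $\mathcal{P}$ of subgroups (repetitions allowed); $G/\mathcal{P}=\coprod_{P\in\mathcal{P}}G/P$, viewed as the collection of cosets regarded as subsets of $G$. For $S\subseteq G$ let $\varphi\colon F(S)*\mathop{\ast}_{P\in\mathcal{P}}P\to G$ be induced by inclusions. $S$ is a relative generating set if $\varphi$ is surjective; a relative presentation $\langle S,\mathcal{P}\mid R\rangle$ consists of a relative generating set $S$ and a subset $R$ of the free product normally generating $\ker\varphi$; $(G,\mathcal{P})$ is relatively finitely presented if there is one with $S,R$ finite. Groups carry word metrics for finite generating sets; $f$ is $(L,C)$-Lipschitz if $d(f(x),f(x'))\le L\,d(x,x')+C$. For $L\ge1,C\ge0,M\ge0$, an $(L,C,M)$-Lipschitz map of pairs $f=(f_1,f_2)\colon(G,\mathcal{P})\to(H,\mathcal{Q})$ is an $(L,C)$-Lipschitz $f_1\colon G\to H$ with a function $f_2\colon G/\mathcal{P}\to H/\mathcal{Q}$ such that the Hausdorff distance between $f_1(A)$ and $f_2(A)$ is $<M$ for all $A\in G/\mathcal{P}$. An $(L,C,M)$-quasi-retraction of pairs $(f,r)$ consists of such $f\colon(G,\mathcal{P})\to(H,\mathcal{Q})$ and $r\colon(H,\mathcal{Q})\to(G,\mathcal{P})$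 with $d_G(r_1f_1(g),g)\le C$ for all $g$ and $r_2\circ f_2=\mathrm{id}$. $(G,\mathcal{P})$ is a quasi-retract of $(H,\mathcal{Q})$ if such $(f,r)$ exists for some constants. *)

From Stdlib Require Import List Arith Lia.
Import ListNotations.

Set Implicit Arguments.
Unset Strict Implicit.

Record Group := {
  carrier :> Type;
  gmul : carrier -> carrier -> carrier;
  gone : carrier;
  ginv : carrier -> carrier;
  gmul_assoc : forall x y z, gmul x (gmul y z) = gmul (gmul x y) z;
  gmul_1l : forall x, gmul gone x = x;
  gmul_1r : forall x, gmul x gone = x;
  gmul_Vl : forall x, gmul (ginv x) x = gone;
  gmul_Vr : forall x, gmul x (ginv x) = gone
}.

Arguments gmul {g} _ _.
Arguments gone {g}.
Arguments ginv {g} _.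

Definition is_subgroup (G : Group) (P : G -> Prop) : Prop :=
  P gone /\ (forall x y, P x -> P y -> P (gmul x y)) /\ (forall x, P x -> P (ginv x)).

Definition sgn_val (G : Group) (x : G) (b : bool) : G := if b then x else ginv x.
Arguments sgn_val {G} _ _.

Fixpoint prod_list {G : Group} (l : list (G * bool)) : G :=
  match l with
  | [] => gone
  | (x, b) :: l' => gmul (sgn_val x b) (prod_list l')
  end.

Definition word_len_le (G : Group) (S : list G) (x : G) (n : nat) : Prop :=
  exists l : list (G * bool),
    length l <= n /\ (forall y b, In (y, b) l -> In y S) /\ prod_list l = x.

Definition generates (G : Group) (S : list G) : Prop :=
  forall g : G, exists n, word_len_le S g n.

Definition finitely_generated (G : Group) : Prop :=
  exists S : list G, generates S.

Definition dist_le (G : Group) (S : list G) (x y : G) (n : nat) : Prop :=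
  word_len_le S (gmul (ginv x) y) n.

Definition dist_lt (G : Group) (S : list G) (x y : G) (M : nat) : Prop :=
  exists k, k < M /\ dist_le S x y k.

(** * Group pairs
    [P i] for [i < npar] is the finite, non-empty, indexed collection of
    subgroups (repetitions allowed). *)
Record GroupPair := {
  gp_grp :> Group;
  gp_n : nat;
  gp_sub : nat -> gp_grp -> Prop;
  gp_fg : finitely_generated gp_grp;
  gp_nonempty : 0 < gp_n;
  gp_subgroups : forall i, i < gp_n -> is_subgroup (gp_sub i)
}.

Arguments gp_sub : clear implicits.
Arguments gp_n : clear implicits.

(** Elements of [G/𝒫 = ⊔_{i} G/P_i] are represented by pairs [(i, g)]
    standing for the coset [g P_i] in the [i]-th summand. *)
Definition coset_rep (X : GroupPair) : Type := (nat * X)%type.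

Definition valid_coset (X : GroupPair) (c : coset_rep X) : Prop := fst c < gp_n X.

Definition same_coset (X : GroupPair) (c d : coset_rep X) : Prop :=
  fst c = fst d /\ gp_sub X (fst c) (gmul (ginv (snd c)) (snd d)).

(** * Lipschitz maps of pairs.
    [(L,C,M)]-Lipschitz map of pairs w.r.t. the word metrics of the finite
    generating sets [SX], [SY].  [f2] is a function on cosets, given on
    representatives and required to be well defined. *)
Definition lipschitz_map_of_pairs (X Y : GroupPair) (SX : list X) (SY : list Y)
    (L C M : nat) (f1 : X -> Y) (f2 : coset_rep X -> coset_rep Y) : Prop :=
  (forall x x' n, dist_le SX x x' n -> dist_le SY (f1 x) (f1 x') (L * n + C)) /\
  (forall c, valid_coset c -> valid_coset (f2 c)) /\
  (forall c d, valid_coset c -> same_coset c d -> same_coset (f2 c) (f2 d)) /\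
  (* Hausdorff distance between f1(A) and f2(A) is < M *)
  (forall c, valid_coset c ->
     (forall p, gp_sub X (fst c) p ->
        exists q, gp_sub Y (fst (f2 c)) q /\
          dist_lt SY (f1 (gmul (snd c) p)) (gmul (snd (f2 c)) q) M) /\
     (forall q, gp_sub Y (fst (f2 c)) q ->
        exists p, gp_sub X (fst c) p /\
          dist_lt SY (f1 (gmul (snd c) p)) (gmul (snd (f2 c)) q) M)).

Definition quasi_retract (X Y : GroupPair) : Prop :=
  exists (SX : list X) (SY : list Y) (L C M : nat)
         (f1 : X -> Y) (f2 : coset_rep X -> coset_rep Y)
         (r1 : Y -> X) (r2 : coset_rep Y -> coset_rep X),
    generates SX /\ generates SY /\ 1 <= L /\
    lipschitz_map_of_pairs SX SY L C M f1 f2 /\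
    lipschitz_map_of_pairs SY SX L C M r1 r2 /\
    (forall g : X, dist_le SX (r1 (f1 g)) g C) /\
    (forall c, valid_coset c -> same_coset (r2 (f2 c)) c).

(** * Relative presentations.
    The free product [F(S) * *_{P∈𝒫} P] is the free group on the alphabet
    [S ⊔ ⊔_i P_i] modulo the multiplication tables of the [P_i]. *)
Inductive letter (G : Group) : Type :=
  | LS : G -> letter G
  | LP : nat -> G -> letter G.

Arguments LS {G} _.
Arguments LP {G} _ _.

Definition word (G : Group) : Type := list (letter G * bool).

Definition valid_letter (X : GroupPair) (S : list X) (a : letter X) : Prop :=
  match a with
  | LS s => In s S
  | LP i p => i < gp_n X /\ gp_sub X i p
  end.

Definition valid_word (X : GroupPair) (S : list X) (w : word X) : Prop :=
  forall a b, In (a, b) w -> valid_letter S a.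

Definition letter_val {G : Group} (a : letter G) : G :=
  match a with LS s => s | LP _ p => p end.

Fixpoint phi {G : Group} (w : word G) : G :=
  match w with
  | [] => gone
  | (a, b) :: w' => gmul (sgn_val (letter_val a) b) (phi w')
  end.

(** Consequence relation: the congruence on words generated by free
    cancellation of valid letters and by the relators [Rel]; a word is in the
    normal closure of [Rel] in the free group iff it is related to [[]]. *)
Inductive conseq (G : Group) (vl : letter G -> Prop) (Rel : word G -> Prop)
  : word G -> word G -> Prop :=
  | cq_refl : forall w, conseq vl Rel w w
  | cq_sym : forall u v, conseq vl Rel u v -> conseq vl Rel v u
  | cq_trans : forall u v w, conseq vl Rel u v -> conseq vl Rel v w -> conseq vl Rel u w
  | cq_cancel : forall u v a b, vl a ->
      conseq vl Rel (u ++ (a, b) :: (a, negb b) :: v) (u ++ v)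
  | cq_rel : forall u v r, Rel r -> conseq vl Rel (u ++ r ++ v) (u ++ v).

Definition table_rel (X : GroupPair) (w : word X) : Prop :=
  exists i p q, i < gp_n X /\ gp_sub X i p /\ gp_sub X i q /\
    w = [(LP i p, true); (LP i q, true); (LP i (gmul p q), false)].

Definition relative_presentation (X : GroupPair) (S : list X) (R : list (word X)) : Prop :=
  (forall g : X, exists w, valid_word S w /\ phi w = g) /\
  (forall r, In r R -> valid_word S r) /\
  (forall w, valid_word S w ->
     (phi w = gone <->
      conseq (valid_letter S) (fun r => In r R \/ table_rel r) w [])).

Definition rel_fin_presented (X : GroupPair) : Prop :=
  exists (S : list X) (R : list (word X)), relative_presentation S R.

(* Let [S] be a finite generating set of [G].  For [K] large, [(G, P)] is presented relative
   to [S] by the "short relators" [s_1 ... s_k p^-1] with [k <= K] and [p] in some [P_i], of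
   which there are finitely many.  To see that they generate all relations, fix a finite
   relative presentation [<T, Q | R>] of [(H, Q)] and transport words of [H] back to [G] through
   the quasi-retraction [r]: a [T]-letter becomes a geodesic between the [r1]-images of its
   endpoints, and a letter of [Q_j] read at [y] becomes a single letter of [P_k], where
   [r2 (y Q_j)] is a coset of [P_k], framed by two paths of length less than [M].  Relators of
   [R] and free cancellations of [T]-letters transport to short loops; words inside one [Q_j]
   stay inside one coset of [P_k] and collapse to one letter; so transport maps consequences in
   [H] to consequences of the short relators.  Finally a word [w] of [G] is compared letter by
   letter with the transports of words of [H] for [f1] of its prefixes: as [r1 o f1] is
   [C]-close to the identity and [r2 o f2 = id], each comparison is a short loop through at
   most one letter of some [P_i]. *)

From Stdlib Require Import List Arith Lia Wf_nat Classical ClassicalEpsilon.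
Import ListNotations.
Set Implicit Arguments.
Unset Strict Implicit.

Section GroupFacts.
Variable G : Group.
Implicit Types a b c : G.

Lemma gmul_assocr a b c : gmul (gmul a b) c = gmul a (gmul b c).
Proof. now rewrite gmul_assoc. Qed.

Lemma mulKV a b : gmul a (gmul (ginv a) b) = b.
Proof. now rewrite gmul_assoc, gmul_Vr, gmul_1l. Qed.

Lemma mulVK a b : gmul (ginv a) (gmul a b) = b.
Proof. now rewrite gmul_assoc, gmul_Vl, gmul_1l. Qed.

Lemma gmul_cancel_l a b c : gmul a b = gmul a c -> b = c.
Proof. intro H. now rewrite <- (mulVK a b), H, mulVK. Qed.

Lemma ginv_unique a b : gmul a b = gone -> b = ginv a.
Proof. intro H. apply gmul_cancel_l with a. now rewrite H, gmul_Vr. Qed.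

Lemma ginv_ginv a : ginv (ginv a) = a.
Proof. symmetry. apply ginv_unique, gmul_Vl. Qed.

Lemma ginv_one : ginv (@gone G) = gone.
Proof. symmetry. apply ginv_unique, gmul_1l. Qed.

Lemma ginv_mul a b : ginv (gmul a b) = gmul (ginv b) (ginv a).
Proof. symmetry. apply ginv_unique. rewrite gmul_assocr, mulKV. apply gmul_Vr. Qed.

Lemma sgn_val_negb a s : sgn_val a (negb s) = ginv (sgn_val a s).
Proof. destruct s; simpl; now rewrite ?ginv_ginv. Qed.

End GroupFacts.

Ltac gsimpl := repeat rewrite ?gmul_assocr, ?gmul_1l, ?gmul_1r, ?ginv_mul, ?ginv_ginv,
  ?ginv_one, ?gmul_Vr, ?gmul_Vl, ?mulKV, ?mulVK.

Section SubgroupFacts.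
Variables (Z : GroupPair) (i : nat).
Hypothesis Hi : i < gp_n Z.

Lemma gp_sub1 : gp_sub Z i gone.
Proof. apply (gp_subgroups Hi). Qed.

Lemma gp_subM a b : gp_sub Z i a -> gp_sub Z i b -> gp_sub Z i (gmul a b).
Proof. apply (gp_subgroups Hi). Qed.

Lemma gp_subV a : gp_sub Z i a -> gp_sub Z i (ginv a).
Proof. apply (gp_subgroups Hi). Qed.

Lemma gp_sub_sgn a s : gp_sub Z i a -> gp_sub Z i (sgn_val a s).
Proof. destruct s; simpl; auto using gp_subV. Qed.

Lemma gp_sub_divl a b : gp_sub Z i a -> gp_sub Z i b -> gp_sub Z i (gmul (ginv a) b).
Proof. auto using gp_subM, gp_subV. Qed.

End SubgroupFacts.

Lemma same_coset_step (Z : GroupPair) j (y z : Z) :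
  gp_sub Z j z -> same_coset (j, y) (j, gmul y z).
Proof. split; simpl; now rewrite ?mulVK. Qed.

Lemma same_coset_sym (Z : GroupPair) (c d : coset_rep Z) :
  valid_coset c -> same_coset c d -> same_coset d c.
Proof.
  destruct c as [i a], d as [j b]; intros Hi [Hij H]; simpl in *; subst j.
  split; auto. apply (gp_subV Hi) in H. now rewrite ginv_mul, ginv_ginv in H.
Qed.

Lemma same_coset_trans (Z : GroupPair) (c d e : coset_rep Z) :
  valid_coset c -> same_coset c d -> same_coset d e -> same_coset c e.
Proof.
  destruct c as [i a], d as [j b], e as [k x]; intros Hi [Hij H] [Hjk H']; simpl in *; subst.
  split; auto. pose proof (gp_subM Hi H H'). now rewrite gmul_assocr, mulKV in H0.
Qed.

Lemma prod_list_app (G : Group) (l1 l2 : list (G * bool)) :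
  prod_list (l1 ++ l2) = gmul (prod_list l1) (prod_list l2).
Proof. induction l1 as [|[x b] l IH]; simpl; gsimpl; now rewrite ?IH. Qed.

Lemma phi_app (G : Group) (u v : word G) : phi (u ++ v) = gmul (phi u) (phi v).
Proof. induction u as [|[x b] l IH]; simpl; gsimpl; now rewrite ?IH. Qed.

Definition inv_word {G : Group} (w : word G) : word G :=
  rev (map (fun ab => (fst ab, negb (snd ab))) w).

Lemma inv_word_cons (G : Group) (a : letter G) b w :
  inv_word ((a, b) :: w) = inv_word w ++ [(a, negb b)].
Proof. reflexivity. Qed.

Lemma inv_word_app (G : Group) (u v : word G) : inv_word (u ++ v) = inv_word v ++ inv_word u.
Proof. unfold inv_word. now rewrite map_app, rev_app_distr. Qed.

Lemma inv_wordK (G : Group) (w : word G) : inv_word (inv_word w) = w.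
Proof.
  induction w as [|[a b] w IH]; auto.
  rewrite inv_word_cons, inv_word_app, IH; simpl. now rewrite Bool.negb_involutive.
Qed.

Lemma phi_inv_word (G : Group) (w : word G) : phi (inv_word w) = ginv (phi w).
Proof.
  induction w as [|[a b] w IH]; simpl; gsimpl; auto.
  rewrite inv_word_cons, phi_app, IH; simpl. rewrite sgn_val_negb. now gsimpl.
Qed.

Lemma in_inv_word (G : Group) (w : word G) a b : In (a, b) (inv_word w) -> In (a, negb b) w.
Proof.
  unfold inv_word. rewrite <- in_rev, in_map_iff. intros [[a' b'] [E H]].
  injection E as -> <-. now rewrite Bool.negb_involutive.
Qed.

(* [valid_word S] unfolds to [all_letters (valid_letter S)]. *)
Section AllLetters.
Variables (G : Group) (vl : letter G -> Prop).

Definition all_letters (w : word G) : Prop := forall a b, In (a, b) w -> vl a.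

Lemma all_letters_nil : all_letters [].
Proof. intros a b []. Qed.

Lemma all_letters_cons a b w : vl a -> all_letters w -> all_letters ((a, b) :: w).
Proof. intros Ha Hw a' b' [E|H]; [now injection E as -> _ | eauto]. Qed.

Lemma all_letters_app u v : all_letters (u ++ v) <-> all_letters u /\ all_letters v.
Proof.
  split.
  - intro H; split; intros a b Hin; eapply H; apply in_or_app; eauto.
  - intros [H1 H2] a b Hin. apply in_app_or in Hin as [Hin|Hin]; eauto.
Qed.

Lemma all_letters_inv w : all_letters w -> all_letters (inv_word w).
Proof. intros H a b Hin. apply in_inv_word in Hin. eauto. Qed.

End AllLetters.

Section Conseq.
Variables (G : Group) (vl : letter G -> Prop) (Rel : word G -> Prop).
Notation cq := (conseq vl Rel).

Lemma conseq_ctx u v p s : cq u v -> cq (p ++ u ++ s) (p ++ v ++ s).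
Proof.
  induction 1 as [| | |u v a b Ha|u v r Hr].
  - apply cq_refl.
  - now apply cq_sym.
  - eapply cq_trans; eauto.
  - replace (p ++ (u ++ (a, b) :: (a, negb b) :: v) ++ s)
      with ((p ++ u) ++ (a, b) :: (a, negb b) :: (v ++ s)) by now rewrite <- !app_assoc.
    replace (p ++ (u ++ v) ++ s) with ((p ++ u) ++ (v ++ s)) by now rewrite <- !app_assoc.
    now apply cq_cancel.
  - replace (p ++ (u ++ r ++ v) ++ s) with ((p ++ u) ++ r ++ (v ++ s)) by now rewrite <- !app_assoc.
    replace (p ++ (u ++ v) ++ s) with ((p ++ u) ++ (v ++ s)) by now rewrite <- !app_assoc.
    now apply cq_rel.
Qed.

Lemma conseq_catl p u v : cq u v -> cq (p ++ u) (p ++ v).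
Proof. intro H. pose proof (conseq_ctx p [] H). now rewrite !app_nil_r in H0. Qed.

Lemma conseq_catr s u v : cq u v -> cq (u ++ s) (v ++ s).
Proof. exact (conseq_ctx [] s). Qed.

Lemma conseq_cat u u' v v' : cq u u' -> cq v v' -> cq (u ++ v) (u' ++ v').
Proof. intros H1 H2. eapply cq_trans; [apply conseq_catr, H1 | apply conseq_catl, H2]. Qed.

Lemma conseq_relator r : Rel r -> cq r [].
Proof. intro H. pose proof (cq_rel vl [] [] H). now rewrite app_nil_r in H0. Qed.

Lemma conseq_cancel_word w : all_letters vl w -> cq (w ++ inv_word w) [].
Proof.
  induction w as [|[a b] w IH]; intro Hw; [apply cq_refl|].
  apply all_letters_app with (u := [(a, b)]) in Hw as [Ha Hw].
  rewrite inv_word_cons, app_assoc. simpl.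
  eapply cq_trans; [apply (conseq_ctx [(a, b)] [(a, negb b)] (IH Hw))|].
  apply (cq_cancel Rel [] []). eapply Ha; left; eauto.
Qed.

Lemma conseq_cancel_inv_word w : all_letters vl w -> cq (inv_word w ++ w) [].
Proof.
  intro H. pose proof (conseq_cancel_word (all_letters_inv H)). now rewrite inv_wordK in H0.
Qed.

Lemma conseq_of_loop u v : all_letters vl v -> cq (u ++ inv_word v) [] -> cq u v.
Proof.
  intros Hv H. apply cq_trans with (u ++ inv_word v ++ v).
  - rewrite <- (app_nil_r u) at 1. apply conseq_catl, cq_sym, conseq_cancel_inv_word, Hv.
  - rewrite app_assoc. exact (conseq_catr v H).
Qed.

Lemma conseq_phi : (forall r, Rel r -> phi r = gone) -> forall u v, cq u v -> phi u = phi v.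
Proof.
  intros HR u v H; induction H; auto; try congruence; rewrite !phi_app; simpl.
  - rewrite sgn_val_negb. now gsimpl.
  - rewrite (HR r H). now gsimpl.
Qed.

Lemma conseq_all_letters :
  (forall r, Rel r -> all_letters vl r) ->
  forall u v, cq u v -> all_letters vl u <-> all_letters vl v.
Proof.
  intros HR u v H; induction H; try tauto.
  - rewrite !all_letters_app. split; intros [H1 H2]; split; auto.
    + intros a' b' Hin; eapply H2; right; right; eauto.
    + repeat apply all_letters_cons; auto.
  - rewrite !all_letters_app. specialize (HR r H). tauto.
Qed.

Lemma conseq_inv_word :
  (forall r, Rel r -> all_letters vl r) -> forall u v, cq u v -> cq (inv_word u) (inv_word v).
Proof.
  intros HR u v H; induction H.
  - apply cq_refl.
  - now apply cq_sym.
  - eapply cq_trans; eauto.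
  - rewrite !inv_word_app, (inv_word_cons a b), (inv_word_cons a (negb b)), <- !app_assoc; simpl.
    rewrite Bool.negb_involutive. now apply cq_cancel.
  - rewrite !inv_word_app, <- app_assoc. apply conseq_catl.
    rewrite <- (app_nil_l (inv_word u)) at 2. apply conseq_catr.
    apply cq_trans with (inv_word r ++ r).
    + rewrite <- (app_nil_r (inv_word r)) at 1. apply conseq_catl, cq_sym, conseq_relator, H.
    + apply conseq_cancel_inv_word, HR, H.
Qed.

End Conseq.

Lemma conseq_mono (G : Group) (vl : letter G -> Prop) (R1 R2 : word G -> Prop) :
  (forall r, R1 r -> R2 r) -> forall u v, conseq vl R1 u v -> conseq vl R2 u v.
Proof.
  intros HR u v H; induction H.
  - apply cq_refl.
  - now apply cq_sym.
  - eapply cq_trans; eauto.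
  - now apply cq_cancel.
  - apply cq_rel; auto.
Qed.

Definition letters_in {G : Group} (S : list G) (l : list (G * bool)) : Prop :=
  forall y b, In (y, b) l -> In y S.

Definition gen_word {G : Group} (l : list (G * bool)) : word G :=
  map (fun sb => (LS (fst sb), snd sb)) l.

Definition inv_list {G : Group} (l : list (G * bool)) : list (G * bool) :=
  rev (map (fun sb => (fst sb, negb (snd sb))) l).

Section GenWords.
Variable G : Group.
Implicit Types l : list (G * bool).

Lemma letters_in_app S l1 l2 : letters_in S l1 -> letters_in S l2 -> letters_in S (l1 ++ l2).
Proof. intros H1 H2 y b Hin. apply in_app_or in Hin as [H|H]; eauto. Qed.

Lemma letters_in_inv_list S l : letters_in S l -> letters_in S (inv_list l).
Proof.
  intros H y b Hin. unfold inv_list in Hin. rewrite <- in_rev, in_map_iff in Hin.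
  destruct Hin as [[y' b'] [E Hin]]. injection E as -> _. eauto.
Qed.

Lemma length_inv_list l : length (inv_list l) = length l.
Proof. unfold inv_list. now rewrite length_rev, length_map. Qed.

Lemma prod_inv_list l : prod_list (inv_list l) = ginv (prod_list l).
Proof.
  induction l as [|[x b] l IH]; simpl; gsimpl; auto.
  unfold inv_list in *; simpl. rewrite prod_list_app, IH; simpl. rewrite sgn_val_negb. now gsimpl.
Qed.

Lemma gen_word_app l1 l2 : gen_word (l1 ++ l2) = gen_word l1 ++ gen_word l2.
Proof. apply map_app. Qed.

Lemma gen_word_inv_list l : gen_word (inv_list l) = inv_word (gen_word l).
Proof. unfold gen_word, inv_list, inv_word. now rewrite map_rev, !map_map. Qed.

Lemma phi_gen_word l : phi (gen_word l) = prod_list l.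
Proof. induction l as [|[x b] l IH]; simpl; now rewrite ?IH. Qed.

End GenWords.

Lemma valid_gen_word (X : GroupPair) (S : list X) l : letters_in S l -> valid_word S (gen_word l).
Proof.
  intros H a b Hin. unfold gen_word in Hin. apply in_map_iff in Hin as [[y b'] [E Hin]].
  injection E as <- _. simpl. eauto.
Qed.

Section WordMetric.
Variables (G : Group) (S : list G).

Lemma word_len_le_mono x n m : word_len_le S x n -> n <= m -> word_len_le S x m.
Proof. intros (l & H1 & H2 & H3) Hm. exists l. repeat split; auto. lia. Qed.

Lemma word_len_le_inv x n : word_len_le S x n -> word_len_le S (ginv x) n.
Proof.
  intros (l & H1 & H2 & H3). exists (inv_list l).
  rewrite length_inv_list, prod_inv_list, H3. repeat split; auto. now apply letters_in_inv_list.
Qed.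

Lemma word_len_le_mul x y n m :
  word_len_le S x n -> word_len_le S y m -> word_len_le S (gmul x y) (n + m).
Proof.
  intros (l & H1 & H2 & H3) (l' & H1' & H2' & H3'). exists (l ++ l').
  rewrite length_app, prod_list_app, H3, H3'. repeat split; try lia. now apply letters_in_app.
Qed.

Lemma word_len_le_gen s b : In s S -> word_len_le S (sgn_val s b) 1.
Proof.
  intro H. exists [(s, b)]. simpl. split; [lia|split; [|now gsimpl]].
  intros y b' [E|[]]. now injection E as <- _.
Qed.

Lemma dist_le_sym x y n : dist_le S x y n -> dist_le S y x n.
Proof.
  unfold dist_le. intro H. apply word_len_le_inv in H. now rewrite ginv_mul, ginv_ginv in H.
Qed.

Lemma dist_le_trans x y z n m : dist_le S x y n -> dist_le S y z m -> dist_le S x z (n + m).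
Proof.
  unfold dist_le. intros H1 H2. pose proof (word_len_le_mul H1 H2).
  now rewrite gmul_assocr, mulKV in H.
Qed.

Lemma dist_lt_le x y M : dist_lt S x y M -> dist_le S x y M.
Proof. intros (k & Hk & H). eapply word_len_le_mono; eauto. lia. Qed.

Lemma dist_le_step y v b m : word_len_le S v m -> dist_le S y (gmul y (sgn_val v b)) m.
Proof. intro H. unfold dist_le. rewrite mulVK. destruct b; simpl; auto using word_len_le_inv. Qed.

Definition geodesic_spec (a b : G) (l : list (G * bool)) : Prop :=
  letters_in S l /\ prod_list l = gmul (ginv a) b /\ forall n, dist_le S a b n -> length l <= n.

Definition geodesic (a b : G) : list (G * bool) := epsilon (inhabits []) (geodesic_spec a b).

Lemma geodesicP a b : generates S -> geodesic_spec a b (geodesic a b).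
Proof.
  intro HS. unfold geodesic. apply epsilon_spec.
  destruct (@dec_inh_nat_subset_has_unique_least_element (dist_le S a b))
    as (n & [(l & H1 & H2 & H3) Hmin] & _); [intro; apply classic | apply HS|].
  exists l. repeat split; auto. intros k Hk. specialize (Hmin k Hk). lia.
Qed.

End WordMetric.

Definition pick {A : Type} (d : A) (P : A -> Prop) : A := epsilon (inhabits d) P.

Lemma pickP A (d : A) (P : A -> Prop) : (exists x, P x) -> P (pick d P).
Proof. unfold pick. apply epsilon_spec. Qed.

Lemma list_uniform_bound A (l : list A) (P : A -> nat -> Prop) :
  (forall x n m, P x n -> n <= m -> P x m) ->
  (forall x, In x l -> exists n, P x n) -> exists n, forall x, In x l -> P x n.
Proof.
  intros Hm. induction l as [|x l IH]; intro H.
  - exists 0. intros _ [].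
  - destruct IH as [n Hn]; [intros y Hy; apply H; now right|].
    destruct (H x (or_introl eq_refl)) as [k Hk].
    exists (n + k). intros y [<-|Hy]; eapply Hm; eauto; lia.
Qed.

Lemma list_filter_prop A (l : list A) (P : A -> Prop) :
  exists l', forall x, In x l' <-> In x l /\ P x.
Proof.
  induction l as [|a l [l' IH]]; [exists []; simpl; tauto|].
  destruct (classic (P a)); [exists (a :: l') | exists l']; intro x; simpl; rewrite IH.
  - split; [intros [<-|H']|]; tauto.
  - split; [|intros [[<-|H'] HP]]; tauto.
Qed.

Lemma bounded_lists_finite (G : Group) (S : list G) k :
  exists LL, forall l, letters_in S l -> length l <= k -> In l LL.
Proof.
  induction k as [|k [LL IH]].
  - exists [[]]. intros [|] _ Hl; simpl in *; auto. lia.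
  - exists ([] :: flat_map (fun l => flat_map (fun s => [(s, true) :: l; (s, false) :: l]) S) LL).
    intros [|[s b] l] Hs Hl; [now left|right].
    apply in_flat_map. exists l. split.
    + apply IH; [intros y b' H; eapply Hs; right; eauto | simpl in Hl; lia].
    + apply in_flat_map. exists s. split; [eapply Hs; left; eauto | destruct b; simpl; auto].
Qed.

(** * The short relators of a group pair *)

Section ShortRelators.
Variables (X : GroupPair) (SX : list X) (K : nat).

Definition short_relator (r : word X) : Prop :=
  exists l i, letters_in SX l /\ length l <= K /\ i < gp_n X /\ gp_sub X i (prod_list l) /\
    r = gen_word l ++ [(LP i (prod_list l), false)].

Definition short_rel (r : word X) : Prop := short_relator r \/ table_rel r.

Notation E := (conseq (valid_letter SX) short_rel).

Lemma short_rel_phi r : short_rel r -> phi r = gone.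
Proof.
  intros [(l & i & _ & _ & _ & _ & ->) | (i & p & q & _ & _ & _ & ->)]; simpl.
  - rewrite phi_app, phi_gen_word; simpl. now gsimpl.
  - now gsimpl.
Qed.

Lemma short_rel_valid r : short_rel r -> valid_word SX r.
Proof.
  intros [(l & i & Hl & _ & Hi & Hp & ->) | (i & p & q & Hi & Hp & Hq & ->)].
  - apply all_letters_app. split; [now apply valid_gen_word|].
    apply all_letters_cons; [now split | apply all_letters_nil].
  - repeat apply all_letters_cons; try apply all_letters_nil; split; auto using gp_subM.
Qed.

Lemma E_phi u v : E u v -> phi u = phi v.
Proof. apply conseq_phi, short_rel_phi. Qed.

Lemma E_inv u v : E u v -> E (inv_word u) (inv_word v).
Proof. apply conseq_inv_word, short_rel_valid. Qed.

Lemma E_of_letter_loop w a : valid_letter SX a -> E (w ++ [(a, false)]) [] -> E w [(a, true)].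
Proof.
  intros Ha H. apply conseq_of_loop; [|exact H].
  apply all_letters_cons; [exact Ha | apply all_letters_nil].
Qed.

Section Letters.
Variable i : nat.
Hypothesis Hi : i < gp_n X.

Lemma merge_letters a b : gp_sub X i a -> gp_sub X i b ->
  E [(LP i a, true); (LP i b, true)] [(LP i (gmul a b), true)].
Proof.
  intros Ha Hb. apply E_of_letter_loop; [split; auto using gp_subM|].
  apply conseq_relator. right. now exists i, a, b.
Qed.

Lemma unit_letter_trivial : E [(LP i gone, true)] [].
Proof.
  apply cq_trans with [(LP i gone, true); (LP i gone, true); (LP i gone, false)].
  - apply cq_sym, (cq_cancel short_rel [(LP i gone, true)] []). split; auto using gp_sub1.
  - apply conseq_relator. right. exists i, gone, gone. rewrite gmul_1l. auto using gp_sub1.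
Qed.

End Letters.

Definition short (k : nat) (w : word X) : Prop :=
  exists l, letters_in SX l /\ length l <= k /\ E w (gen_word l).

Lemma short_mono k k' w : short k w -> k <= k' -> short k' w.
Proof. intros (l & H1 & H2 & H3) H. exists l. repeat split; auto. lia. Qed.

Lemma short_cat k1 k2 u v : short k1 u -> short k2 v -> short (k1 + k2) (u ++ v).
Proof.
  intros (l & H1 & H2 & H3) (l' & H1' & H2' & H3'). exists (l ++ l').
  rewrite gen_word_app, length_app. repeat split; auto using conseq_cat; try lia.
  now apply letters_in_app.
Qed.

Lemma short_gen_word l k : letters_in SX l -> length l <= k -> short k (gen_word l).
Proof. intros H1 H2. exists l. repeat split; auto. apply cq_refl. Qed.

Lemma short_nil : short 0 [].
Proof. apply (short_gen_word (l := [])); [intros y b []|auto]. Qed.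

Lemma short_inv k w : short k w -> short k (inv_word w).
Proof.
  intros (l & H1 & H2 & H3). exists (inv_list l). rewrite length_inv_list, gen_word_inv_list.
  repeat split; auto using E_inv. now apply letters_in_inv_list.
Qed.

Lemma short_valid k w : short k w -> valid_word SX w.
Proof.
  intros (l & H1 & H2 & H3). apply (conseq_all_letters short_rel_valid H3).
  now apply valid_gen_word.
Qed.

Lemma short_collapse k w i : short k w -> k <= K -> i < gp_n X -> gp_sub X i (phi w) ->
  E w [(LP i (phi w), true)].
Proof.
  intros (l & H1 & H2 & H3) Hk Hi Hp. rewrite (E_phi H3), phi_gen_word in *.
  apply cq_trans with (1 := H3), E_of_letter_loop; [now split|].
  apply conseq_relator. left. exists l, i. repeat split; auto. lia.
Qed.

Lemma short_trivial k w : short k w -> k <= K -> phi w = gone -> E w [].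
Proof.
  intros Hs Hk Hp. pose proof (gp_nonempty X) as Hn.
  eapply cq_trans; [apply (short_collapse Hs Hk Hn)|]; rewrite Hp.
  - apply gp_sub1, Hn.
  - apply unit_letter_trivial, Hn.
Qed.

Lemma short_eq k1 k2 u v : short k1 u -> short k2 v -> k1 + k2 <= K -> phi u = phi v -> E u v.
Proof.
  intros Hu Hv Hk Hp. apply conseq_of_loop; [exact (short_valid Hv)|].
  apply (short_trivial (short_cat Hu (short_inv Hv)) Hk).
  rewrite phi_app, phi_inv_word, Hp. now gsimpl.
Qed.

Lemma short_letter i x b m : i < gp_n X -> gp_sub X i x -> word_len_le SX x m -> m <= K ->
  short m [(LP i x, b)].
Proof.
  intros Hi Hx (l & H1 & H2 & <-) Hm.
  assert (Hc : E (gen_word l) [(LP i (prod_list l), true)]).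
  { rewrite <- phi_gen_word. apply (short_collapse (k := m)); auto; [|now rewrite phi_gen_word].
    now apply short_gen_word. }
  destruct b.
  - exists l. repeat split; auto. now apply cq_sym.
  - exists (inv_list l). rewrite length_inv_list, gen_word_inv_list.
    repeat split; auto; [now apply letters_in_inv_list | apply cq_sym, (E_inv Hc)].
Qed.

Section ParabolicLetters.
Variable i : nat.
Hypothesis Hi : i < gp_n X.

Lemma absorb_short_r k z w : short k w -> k <= K -> gp_sub X i z -> gp_sub X i (phi w) ->
  E ([(LP i z, true)] ++ w) [(LP i (gmul z (phi w)), true)].
Proof.
  intros Hw Hk Hz Hp. eapply cq_trans; [apply conseq_catl, (short_collapse Hw Hk Hi Hp)|].
  now apply merge_letters.
Qed.

Lemma merge_through_short k x1 x2 w : short k w -> k <= K -> gp_sub X i x1 -> gp_sub X i x2 ->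
  gp_sub X i (phi w) ->
  E ([(LP i x1, true)] ++ w ++ [(LP i x2, true)]) [(LP i (gmul x1 (gmul (phi w) x2)), true)].
Proof.
  intros Hw Hk H1 H2 Hp. rewrite app_assoc.
  eapply cq_trans; [apply conseq_catr, (absorb_short_r Hw Hk H1 Hp)|].
  rewrite <- gmul_assocr. apply merge_letters; auto using gp_subM.
Qed.

Lemma short_shift_letter k u v : short k u -> short k v -> k + k <= K ->
  gp_sub X i (gmul (ginv (phi u)) (phi v)) ->
  E v (u ++ [(LP i (gmul (ginv (phi u)) (phi v)), true)]).
Proof.
  intros Hu Hv Hk Hp.
  apply cq_trans with (u ++ inv_word u ++ v).
  - rewrite app_assoc. rewrite <- (app_nil_l v) at 1. apply conseq_catr, cq_sym.
    apply conseq_cancel_word, (short_valid Hu).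
  - apply conseq_catl. rewrite <- phi_inv_word, <- phi_app.
    apply (short_collapse (short_cat (short_inv Hu) Hv)); auto.
    now rewrite phi_app, phi_inv_word.
Qed.

Lemma short_sandwich k A B A' B' z z' : short k A -> short k B -> short k A' -> short k B' ->
  k + k <= K -> gp_sub X i z -> gp_sub X i z' ->
  gp_sub X i (gmul (ginv (phi A)) (phi A')) ->
  phi (A ++ [(LP i z, true)] ++ B) = phi (A' ++ [(LP i z', true)] ++ B') ->
  E (A ++ [(LP i z, true)] ++ B) (A' ++ [(LP i z', true)] ++ B').
Proof.
  intros HA HB HA' HB' Hk Hz Hz' Ha Heq.
  (* [B ++ inv_word B'] collapses into a [P_i]-letter, and [A'] into [A] followed by one. *)
  set (a := gmul (ginv (phi A)) (phi A')) in *.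
  rewrite !phi_app in Heq; simpl in Heq; rewrite !gmul_1r in Heq.
  assert (HpB : gmul (phi B) (ginv (phi B')) = gmul (ginv z) (gmul a z')).
  { assert (Hb : phi B = gmul (ginv z) (gmul (ginv (phi A)) (gmul (phi A') (gmul z' (phi B')))))
      by (rewrite <- Heq; now gsimpl).
    unfold a. rewrite Hb. now gsimpl. }
  apply cq_trans with (A ++ [(LP i z, true)] ++ (B ++ inv_word B') ++ B').
  { do 2 apply conseq_catl. rewrite <- app_assoc, <- (app_nil_r B) at 1.
    apply conseq_catl, cq_sym, conseq_cancel_inv_word, (short_valid HB'). }
  apply cq_trans with (A ++ [(LP i (gmul a z'), true)] ++ B').
  { apply conseq_catl. rewrite app_assoc. apply conseq_catr.
    replace (gmul a z') with (gmul z (phi (B ++ inv_word B')))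
      by (rewrite phi_app, phi_inv_word, HpB; now gsimpl).
    apply absorb_short_r with (k + k); auto using short_cat, short_inv.
    rewrite phi_app, phi_inv_word, HpB. auto using gp_subM, gp_subV. }
  apply cq_trans with ((A ++ [(LP i a, true)]) ++ [(LP i z', true)] ++ B').
  { rewrite <- app_assoc. apply conseq_catl. rewrite app_assoc. apply conseq_catr.
    now apply cq_sym, merge_letters. }
  apply conseq_catr, cq_sym. now apply (short_shift_letter HA HA').
Qed.

End ParabolicLetters.

End ShortRelators.

Lemma short_relators_finite (X : GroupPair) (SX : list X) K :
  exists R, forall r, In r R <-> short_relator SX K r.
Proof.
  destruct (bounded_lists_finite SX K) as [LL HLL].
  destruct (list_filter_prop
    (flat_map (fun l => map (fun i => gen_word l ++ [(LP i (prod_list l), false)])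
                            (seq 0 (gp_n X))) LL)
    (short_relator SX K)) as [R HR].
  exists R. intro r. rewrite HR. split; [tauto|]. intro H. split; auto.
  destruct H as (l & i & H1 & H2 & H3 & H4 & ->). apply in_flat_map. exists l. split; auto.
  apply in_map_iff. exists i. split; auto. apply in_seq. lia.
Qed.

Lemma rel_fin_presented_of_short_relators (X : GroupPair) (SX : list X) K : generates SX ->
  (forall w, valid_word SX w -> phi w = gone -> conseq (valid_letter SX) (short_rel SX K) w []) ->
  rel_fin_presented X.
Proof.
  intros HSX Hcomplete. destruct (short_relators_finite SX K) as [R HR].
  assert (Hrel : forall r, short_rel SX K r <-> In r R \/ table_rel r).
  { intro r. unfold short_rel. now rewrite HR. }
  exists SX, R. split; [|split].
  - intro g. destruct (HSX g) as (n & l & _ & Hl & <-).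
    exists (gen_word l). split; [now apply valid_gen_word | apply phi_gen_word].
  - intros r Hr. apply short_rel_valid with K. now left; apply HR.
  - intros w Hw. split.
    + intro Hp. apply (conseq_mono (fun r => proj1 (Hrel r))). auto.
    + intro H. apply (conseq_mono (fun r => proj2 (Hrel r))), E_phi in H. exact H.
Qed.

(** * Transport along a quasi-retraction *)

Section LipschitzPairs.
Variables (X Y : GroupPair) (SX : list X) (SY : list Y) (L C M : nat).
Variables (f1 : X -> Y) (f2 : coset_rep X -> coset_rep Y).
Hypothesis Hf : lipschitz_map_of_pairs SX SY L C M f1 f2.

Lemma lipschitz_dist x x' n : dist_le SX x x' n -> dist_le SY (f1 x) (f1 x') (L * n + C).
Proof. apply Hf. Qed.

Lemma lipschitz_coset_valid c : valid_coset c -> valid_coset (f2 c).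
Proof. apply Hf. Qed.

Lemma lipschitz_same_coset c d : valid_coset c -> same_coset c d -> same_coset (f2 c) (f2 d).
Proof. apply Hf. Qed.

Lemma lipschitz_near_coset c p : valid_coset c -> gp_sub X (fst c) p ->
  exists q, gp_sub Y (fst (f2 c)) q /\ dist_lt SY (f1 (gmul (snd c) p)) (gmul (snd (f2 c)) q) M.
Proof. intros Hc. apply Hf, Hc. Qed.

End LipschitzPairs.

Section Retraction.
Variables (X Y : GroupPair) (SX : list X) (SY : list Y) (L C M : nat).
Variables (f1 : X -> Y) (f2 : coset_rep X -> coset_rep Y).
Variables (r1 : Y -> X) (r2 : coset_rep Y -> coset_rep X).
Hypothesis HSX : generates SX.
Hypothesis HSY : generates SY.
Hypothesis Hf : lipschitz_map_of_pairs SX SY L C M f1 f2.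
Hypothesis Hr : lipschitz_map_of_pairs SY SX L C M r1 r2.
Hypothesis Hret1 : forall g, dist_le SX (r1 (f1 g)) g C.
Hypothesis Hret2 : forall c, valid_coset c -> same_coset (r2 (f2 c)) c.
Variables (T : list Y) (RY : list (word Y)).
Hypothesis HY : relative_presentation T RY.

Notation EY := (conseq (valid_letter T) (fun r => In r RY \/ table_rel r)).

Lemma presentation_surjective h : exists W, valid_word T W /\ phi W = h.
Proof. apply HY. Qed.

Lemma presentation_relator_phi r : In r RY -> phi r = gone.
Proof.
  intro H. destruct HY as (_ & Hv & Hiff). apply Hiff; [now apply Hv|].
  apply conseq_relator. now left.
Qed.

Lemma presentation_complete W W' : valid_word T W -> valid_word T W' -> phi W = phi W' -> EY W W'.
Proof.
  intros Hv Hv' Hp. destruct HY as (_ & _ & Hiff). apply conseq_of_loop; [exact Hv'|].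
  apply Hiff.
  - apply all_letters_app. split; [exact Hv | now apply all_letters_inv].
  - rewrite phi_app, phi_inv_word, Hp. now gsimpl.
Qed.

Definition bounded_letters (m : nat) (W : word Y) : Prop :=
  forall a b, In (a, b) W -> word_len_le SY (letter_val a) m.

Lemma bounded_letters_mono m m' W : bounded_letters m W -> m <= m' -> bounded_letters m' W.
Proof. intros H Hm a b Hin. eapply word_len_le_mono; eauto. Qed.

Definition gen_lift (s : Y) (b : bool) : word Y :=
  pick [] (fun W => valid_word T W /\ phi W = sgn_val s b).

Lemma gen_liftP s b : valid_word T (gen_lift s b) /\ phi (gen_lift s b) = sgn_val s b.
Proof. unfold gen_lift. apply pickP, presentation_surjective. Qed.

Definition presentation_bounded (m : nat) : Prop :=
  (forall s b, In s SY -> length (gen_lift s b) <= m /\ bounded_letters m (gen_lift s b)) /\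
  (forall t, In t T -> word_len_le SY t m) /\
  (forall r, In r RY -> length r <= m /\ bounded_letters m r).

Lemma length_bounded_letters_exists W : exists m, length W <= m /\ bounded_letters m W.
Proof.
  destruct (list_uniform_bound (l := W)
    (P := fun ab n => word_len_le SY (letter_val (fst ab)) n)) as [m Hm].
  - intros x n m H Hnm. eapply word_len_le_mono; eauto.
  - intros x _. apply HSY.
  - exists (length W + m). split; [lia|]. intros a b Hin.
    eapply word_len_le_mono; [exact (Hm (a, b) Hin) | lia].
Qed.

Lemma presentation_bounded_exists : exists m, presentation_bounded m.
Proof.
  assert (Hmono : forall W n n', length W <= n /\ bounded_letters n W -> n <= n' ->
    length W <= n' /\ bounded_letters n' W).
  { intros W n n' [H1 H2] Hn. split; [lia | eapply bounded_letters_mono; eauto]. }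
  destruct (list_uniform_bound (l := SY) (P := fun s n => forall b,
    length (gen_lift s b) <= n /\ bounded_letters n (gen_lift s b))) as [m1 H1].
  { intros s n n' H Hn b. exact (Hmono _ _ _ (H b) Hn). }
  { intros s _. destruct (length_bounded_letters_exists (gen_lift s true)) as [n1 Hn1].
    destruct (length_bounded_letters_exists (gen_lift s false)) as [n2 Hn2].
    exists (n1 + n2). intros []; eapply Hmono; eauto; lia. }
  destruct (list_uniform_bound (l := T) (P := word_len_le SY)) as [m2 H2];
    [intros; eapply word_len_le_mono; eauto | intros t _; apply HSY|].
  destruct (list_uniform_bound (l := RY)
    (P := fun r n => length r <= n /\ bounded_letters n r)) as [m3 H3];
    [intros r n n' H Hn; exact (Hmono _ _ _ H Hn)
    | intros r _; apply length_bounded_letters_exists|].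
  exists (m1 + m2 + m3). repeat split.
  - apply (Hmono _ m1); auto; lia.
  - apply (Hmono _ m1); auto; lia.
  - intros t Ht. eapply word_len_le_mono; eauto; lia.
  - apply (Hmono _ m3); auto; lia.
  - apply (Hmono _ m3); auto; lia.
Qed.

Section Transport.
Variable m : nat.
Hypothesis Hm : presentation_bounded m.

Definition letter_cost : nat := M + ((2 * M + (L * m + C)) + M).

(* An upper bound for the length of every short loop met below. *)
Definition relator_bound : nat :=
  2 * (M * m * letter_cost + M + C) + (L + C) * m * letter_cost + C + 1 +
  m * letter_cost + 2 * letter_cost.

Notation K := relator_bound.
Notation E := (conseq (valid_letter SX) (short_rel SX K)).

Lemma letter_middle_le_K : 2 * M + (L * m + C) <= K.
Proof. unfold K, letter_cost. lia. Qed.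

Lemma r1_dist y y' n : dist_le SY y y' n -> dist_le SX (r1 y) (r1 y') (L * n + C).
Proof. apply (lipschitz_dist Hr). Qed.

Lemma r2_valid c : valid_coset c -> valid_coset (r2 c).
Proof. apply (lipschitz_coset_valid Hr). Qed.

(* The point [shadow c z] of the coset [r2 c] is [M]-close to [r1 (snd c * z)]; it exists by the
   Hausdorff condition on [r]. *)
Definition shadow_offset (c : coset_rep Y) (z : Y) : X :=
  pick gone (fun p => gp_sub X (fst (r2 c)) p /\
    dist_lt SX (r1 (gmul (snd c) z)) (gmul (snd (r2 c)) p) M).

Definition shadow (c : coset_rep Y) (z : Y) : X := gmul (snd (r2 c)) (shadow_offset c z).

Lemma shadowP c z : valid_coset c -> gp_sub Y (fst c) z ->
  gp_sub X (fst (r2 c)) (shadow_offset c z) /\ dist_lt SX (r1 (gmul (snd c) z)) (shadow c z) M.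
Proof. intros Hc Hz. exact (pickP gone (lipschitz_near_coset Hr Hc Hz)). Qed.

Lemma shadow_coset c d z z' : valid_coset c -> same_coset c d ->
  gp_sub Y (fst c) z -> gp_sub Y (fst c) z' ->
  fst (r2 d) = fst (r2 c) /\ gp_sub X (fst (r2 c)) (gmul (ginv (shadow c z)) (shadow d z')).
Proof.
  intros Hc Hcd Hz Hz'. pose proof (lipschitz_same_coset Hr Hc Hcd) as [Hk Hsub].
  pose proof (r2_valid Hc) as Hv. destruct Hcd as [Hj _].
  destruct (shadowP Hc Hz) as [H1 _].
  destruct (shadowP (c := d) (z := z')) as [H2 _]; [unfold valid_coset in *; now rewrite <- Hj|
    now rewrite <- Hj|].
  split; [congruence|]. rewrite <- Hk in H2. unfold shadow. rewrite ginv_mul, gmul_assocr.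
  apply (gp_subM Hv); [now apply (gp_subV Hv)|]. rewrite <- gmul_assocr. now apply (gp_subM Hv).
Qed.

Definition shadow_step (c : coset_rep Y) (z : Y) : X :=
  gmul (ginv (shadow_offset c gone)) (shadow_offset c z).

Lemma shadow_step_sub c z : valid_coset c -> gp_sub Y (fst c) z ->
  gp_sub X (fst (r2 c)) (shadow_step c z).
Proof.
  intros Hc Hz. apply (gp_sub_divl (r2_valid Hc)); [|now apply shadowP].
  apply shadowP; [exact Hc | exact (gp_sub1 Hc)].
Qed.

Definition path (a b : X) : word X := gen_word (geodesic SX a b).

Lemma phi_path a b : phi (path a b) = gmul (ginv a) b.
Proof. unfold path. rewrite phi_gen_word. apply (geodesicP a b HSX). Qed.

Lemma valid_path a b : valid_word SX (path a b).
Proof. apply valid_gen_word, (geodesicP a b HSX). Qed.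

Lemma short_path a b n : dist_le SX a b n -> short SX K n (path a b).
Proof.
  intro H. destruct (geodesicP a b HSX) as (Hl & _ & Hmin). apply short_gen_word; auto.
Qed.

Definition transport_letter (y : Y) (ab : letter Y * bool) : word X :=
  match ab with
  | (LS t, b) => path (r1 y) (r1 (gmul y (sgn_val t b)))
  | (LP j q, b) =>
      path (r1 y) (shadow (j, y) gone) ++
      [(LP (fst (r2 (j, y))) (shadow_step (j, y) (sgn_val q b)), true)] ++
      path (shadow (j, y) (sgn_val q b)) (r1 (gmul y (sgn_val q b)))
  end.

Fixpoint transport (y : Y) (W : word Y) : word X :=
  match W with
  | [] => []
  | (a, b) :: W' => transport_letter y (a, b) ++ transport (gmul y (sgn_val (letter_val a) b)) W'
  end.

Lemma phi_transport W y : phi (transport y W) = gmul (ginv (r1 y)) (r1 (gmul y (phi W))).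
Proof.
  revert y; induction W as [|[[t|j q] b] W IH]; intro y; simpl.
  - now gsimpl.
  - rewrite phi_app, phi_path, IH. now gsimpl.
  - rewrite !phi_app, IH; simpl. rewrite !phi_path. unfold shadow_step, shadow. now gsimpl.
Qed.

Lemma transport_cat U V y : transport y (U ++ V) = transport y U ++ transport (gmul y (phi U)) V.
Proof.
  revert y; induction U as [|[a b] U IH]; intro y; simpl.
  - now rewrite gmul_1r.
  - now rewrite IH, app_assoc, gmul_assoc.
Qed.

Lemma valid_transport W y : valid_word T W -> valid_word SX (transport y W).
Proof.
  revert y; induction W as [|[a b] W IH]; intros y HW; [apply all_letters_nil|].
  assert (Ha : valid_letter T a) by (eapply HW; left; eauto).
  assert (HW' : valid_word T W) by (intros a' b' H; eapply HW; right; eauto).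
  simpl. apply all_letters_app. split; [|now apply IH].
  destruct a as [t|j q]; simpl; [apply valid_path|].
  destruct Ha as [Hj Hq]. apply all_letters_app; split; [apply valid_path|].
  apply all_letters_cons; [|apply valid_path]. split; [apply (r2_valid (c := (j, y)) Hj)|].
  apply (shadow_step_sub (c := (j, y))); [exact Hj | now apply gp_sub_sgn].
Qed.

Lemma short_transport_letter y a b : valid_letter T a -> word_len_le SY (letter_val a) m ->
  short SX K letter_cost (transport_letter y (a, b)).
Proof.
  intros Ha Hlen. pose proof letter_middle_le_K. unfold letter_cost.
  assert (Hstep : forall v, word_len_le SY v m ->
    dist_le SX (r1 y) (r1 (gmul y (sgn_val v b))) (L * m + C)).
  { intros v Hv. apply r1_dist, dist_le_step, Hv. }
  destruct a as [t|j q]; cbn [letter_val valid_letter transport_letter] in *.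
  - apply short_path. eapply word_len_le_mono; [apply Hstep, Hlen | lia].
  - destruct Ha as [Hj Hq]. assert (Hqb := gp_sub_sgn Hj b Hq).
    destruct (shadowP (c := (j, y)) Hj (gp_sub1 Hj)) as [_ H1].
    destruct (shadowP (c := (j, y)) Hj Hqb) as [_ H2]. cbn [snd] in H1, H2. rewrite gmul_1r in H1.
    apply short_cat; [apply short_path, dist_lt_le, H1|]. apply short_cat.
    + apply short_letter; try lia;
        [apply (r2_valid (c := (j, y)) Hj) | now apply (shadow_step_sub (c := (j, y)))|].
      assert (Hd := dist_le_trans (dist_le_trans (dist_le_sym (dist_lt_le H1)) (Hstep q Hlen))
        (dist_lt_le H2)).
      unfold dist_le, shadow, shadow_step in *. rewrite ginv_mul, gmul_assocr, mulVK in Hd.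
      eapply word_len_le_mono; [exact Hd | lia].
    + apply short_path, dist_le_sym, dist_lt_le, H2.
Qed.

Lemma short_transport W y : valid_word T W -> bounded_letters m W ->
  short SX K (length W * letter_cost) (transport y W).
Proof.
  revert y; induction W as [|[a b] W IH]; intros y HW Hb; [apply short_nil|].
  apply short_cat.
  - apply short_transport_letter; [eapply HW; left; eauto | eapply Hb; left; eauto].
  - apply IH; intros a' b' H; [eapply HW | eapply Hb]; right; eauto.
Qed.

Definition anchor (y : Y) (j : nat) : word X := path (r1 y) (shadow (j, y) gone).

Definition parabolic_word (j : nat) (W : word Y) : Prop :=
  forall a b, In (a, b) W -> exists q, a = LP j q /\ gp_sub Y j q.

Lemma transport_parabolic j W y : j < gp_n Y -> parabolic_word j W ->
  exists x, gp_sub X (fst (r2 (j, y))) x /\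
    E (transport y W ++ anchor (gmul y (phi W)) j) (anchor y j ++ [(LP (fst (r2 (j, y))) x, true)]).
Proof.
  intro Hj. assert (Hk : fst (r2 (j, y)) < gp_n X) by exact (r2_valid (c := (j, y)) Hj).
  revert y Hk; induction W as [|[a b] W IH]; intros y Hk HW; simpl.
  { exists gone. split; [exact (gp_sub1 Hk)|]. rewrite gmul_1r, <- (app_nil_r (anchor y j)) at 1.
    apply conseq_catl, cq_sym, unit_letter_trivial, Hk. }
  destruct (HW a b (or_introl eq_refl)) as (q & -> & Hq). simpl.
  set (z := sgn_val q b). assert (Hz : gp_sub Y j z) by exact (gp_sub_sgn Hj b Hq).
  destruct (shadow_coset (c := (j, y)) (d := (j, gmul y z)) (z := z) (z' := gone) Hj
    (same_coset_step y Hz) Hz (gp_sub1 Hj)) as [Hk' Hsub].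
  destruct (IH (gmul y z)) as (x & Hx & HE);
    [congruence | intros a' b' H; apply (HW a' b'); now right|].
  rewrite Hk' in Hx, HE. set (k := fst (r2 (j, y))) in *.
  set (S := path (shadow (j, y) z) (r1 (gmul y z)) ++ anchor (gmul y z) j).
  assert (HS : short SX K (M + M) S).
  { destruct (shadowP (c := (j, y)) Hj Hz) as [_ H1].
    destruct (shadowP (c := (j, gmul y z)) Hj (gp_sub1 Hj)) as [_ H2]. cbn [snd] in H1, H2.
    rewrite gmul_1r in H2. apply short_cat; apply short_path;
      [apply dist_le_sym|]; now apply dist_lt_le. }
  assert (HpS : phi S = gmul (ginv (shadow (j, y) z)) (shadow (j, gmul y z) gone)).
  { unfold S, anchor. rewrite phi_app, !phi_path. now gsimpl. }
  assert (Hx0 : gp_sub X k (shadow_step (j, y) z)) by exact (shadow_step_sub (c := (j, y)) Hj Hz).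
  exists (gmul (shadow_step (j, y) z) (gmul (phi S) x)). split.
  { apply (gp_subM Hk); auto. apply (gp_subM Hk); auto. now rewrite HpS. }
  rewrite gmul_assoc, <- !app_assoc. fold k. fold (anchor y j). apply conseq_catl.
  apply cq_trans with ([(LP k (shadow_step (j, y) z), true)] ++ S ++ [(LP k x, true)]).
  - simpl. apply (conseq_catl [_]). unfold S. rewrite <- app_assoc. now apply conseq_catl.
  - apply merge_through_short with (M + M); auto; [|now rewrite HpS].
    pose proof letter_middle_le_K. lia.
Qed.

Lemma transport_parabolic_loop j W y : j < gp_n Y -> parabolic_word j W -> phi W = gone ->
  E (transport y W) [].
Proof.
  intros Hj HW Hp. destruct (transport_parabolic y Hj HW) as (x & Hx & HE).
  rewrite Hp, gmul_1r in HE. set (k := fst (r2 (j, y))) in *. set (a := anchor y j) in *.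
  assert (Hk : k < gp_n X) by exact (r2_valid (c := (j, y)) Hj).
  assert (Hx1 : x = gone).
  { apply E_phi in HE. rewrite !phi_app, phi_transport, Hp, gmul_1r in HE; simpl in HE.
    rewrite gmul_1r in HE. apply gmul_cancel_l with (phi a). rewrite <- HE. now gsimpl. }
  subst x. apply cq_trans with (transport y W ++ a ++ inv_word a).
  { rewrite <- (app_nil_r (transport y W)) at 1. apply conseq_catl, cq_sym, conseq_cancel_word.
    apply valid_path. }
  rewrite app_assoc. eapply cq_trans; [apply conseq_catr, HE|].
  rewrite <- app_assoc. apply cq_trans with (a ++ inv_word a).
  - apply conseq_catl. rewrite <- (app_nil_l (inv_word a)) at 2. apply conseq_catr.
    apply unit_letter_trivial, Hk.
  - apply conseq_cancel_word, valid_path.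
Qed.

Lemma transport_relator_trivial r y : In r RY \/ table_rel r -> E (transport y r) [].
Proof.
  intros [Hrel | (j & p & q & Hj & Hp & Hq & ->)].
  - destruct Hm as (_ & _ & Hbound). destruct (Hbound r Hrel) as [Hl Hb].
    apply short_trivial with (m * letter_cost).
    + eapply short_mono; [|apply Nat.mul_le_mono_r, Hl].
      apply short_transport; [apply HY, Hrel | exact Hb].
    + unfold K. lia.
    + rewrite phi_transport, presentation_relator_phi, gmul_1r by exact Hrel. now gsimpl.
  - apply transport_parabolic_loop with j; [exact Hj | |simpl; now gsimpl].
    intros a b [E1|[E1|[E1|[]]]]; injection E1 as <- _; eauto using gp_subM.
Qed.

Lemma transport_cancel_trivial a b y : valid_letter T a -> E (transport y [(a, b); (a, negb b)]) [].
Proof.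
  intro Ha.
  assert (Hp : phi [(a, b); (a, negb b)] = gone) by (simpl; rewrite sgn_val_negb; now gsimpl).
  destruct a as [t|j q].
  - destruct Hm as (_ & Ht & _). apply short_trivial with (2 * letter_cost).
    + apply (short_transport (W := [(LS t, b); (LS t, negb b)]));
        [repeat apply all_letters_cons; auto; apply all_letters_nil|].
      intros a' b' [E1|[E1|[]]]; injection E1 as <- _; now apply Ht.
    + unfold K. lia.
    + now rewrite phi_transport, Hp, gmul_1r, gmul_Vl.
  - destruct Ha as [Hj Hq]. apply transport_parabolic_loop with j; auto.
    intros a' b' [E1|[E1|[]]]; injection E1 as <- _; eauto.
Qed.

Lemma transport_splice u r v y : phi r = gone -> (forall y', E (transport y' r) []) ->
  E (transport y (u ++ r ++ v)) (transport y (u ++ v)).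
Proof.
  intros Hp Hr'. rewrite !transport_cat, Hp, gmul_1r. apply conseq_catl.
  rewrite <- (app_nil_l (transport _ v)) at 2. apply conseq_catr, Hr'.
Qed.

Lemma transport_conseq U V : EY U V -> forall y, E (transport y U) (transport y V).
Proof.
  induction 1 as [| | |u v a b Ha|u v r Hrel]; intro y.
  - apply cq_refl.
  - now apply cq_sym.
  - eapply cq_trans; eauto.
  - apply (transport_splice u (r := [(a, b); (a, negb b)]) v);
      [simpl; rewrite sgn_val_negb; now gsimpl|].
    intro; now apply transport_cancel_trivial.
  - apply transport_splice; [|intro; now apply transport_relator_trivial].
    destruct Hrel as [Hrel | (j & p & q & _ & _ & _ & ->)]; [now apply presentation_relator_phi|].
    simpl. now gsimpl.
Qed.

Lemma transport_phi_eq W W' y : valid_word T W -> valid_word T W' -> phi W = phi W' ->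
  E (transport y W) (transport y W').
Proof. intros Hv Hv' Hp. now apply transport_conseq, presentation_complete. Qed.

Definition lift (l : list (Y * bool)) : word Y := flat_map (fun sb => gen_lift (fst sb) (snd sb)) l.

Lemma lift_spec l : letters_in SY l ->
  valid_word T (lift l) /\ phi (lift l) = prod_list l /\
  bounded_letters m (lift l) /\ length (lift l) <= length l * m.
Proof.
  induction l as [|[s b] l IH]; intro Hl.
  { repeat split; [apply all_letters_nil | intros a b' [] | simpl; lia]. }
  destruct IH as (H1 & H2 & H3 & H4); [intros y b' H; eapply Hl; right; eauto|].
  assert (Hs : In s SY) by (eapply Hl; left; eauto).
  destruct (gen_liftP s b) as [V1 V2]. destruct (proj1 Hm s b Hs) as [B1 B2].
  change (lift ((s, b) :: l)) with (gen_lift s b ++ lift l). repeat split.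
  - now apply all_letters_app.
  - now rewrite phi_app, V2, H2.
  - intros a b' Hin. apply in_app_or in Hin as [Hin|Hin]; eauto.
  - rewrite length_app. simpl. lia.
Qed.

Definition lift_path (a b : Y) : word Y := lift (geodesic SY a b).

Lemma lift_pathP a b : valid_word T (lift_path a b) /\ phi (lift_path a b) = gmul (ginv a) b.
Proof.
  destruct (geodesicP a b HSY) as (Hl & Hp & _).
  destruct (lift_spec Hl) as (H1 & H2 & _). split; [exact H1 | now rewrite <- Hp].
Qed.

Lemma short_transport_lift_path a b n y : dist_le SY a b n ->
  short SX K (n * m * letter_cost) (transport y (lift_path a b)).
Proof.
  intro Hd. destruct (geodesicP a b HSY) as (Hl & _ & Hmin).
  destruct (lift_spec Hl) as (H1 & _ & H3 & H4).
  eapply short_mono; [apply short_transport; eauto|].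
  apply Nat.mul_le_mono_r. eapply Nat.le_trans; [exact H4|]. apply Nat.mul_le_mono_r, Hmin, Hd.
Qed.

Definition pres_word (h : Y) : word Y := pick [] (fun W => valid_word T W /\ phi W = h).

Lemma pres_wordP h : valid_word T (pres_word h) /\ phi (pres_word h) = h.
Proof. unfold pres_word. apply pickP, presentation_surjective. Qed.

Definition return_path (g : X) : word X := path (r1 (f1 g)) g.

Lemma short_return_path g : short SX K C (return_path g).
Proof. apply short_path, Hret1. Qed.

Definition normal_word (g : X) : word X :=
  transport (f1 gone) (pres_word (gmul (ginv (f1 gone)) (f1 g))) ++ return_path g.

Lemma valid_normal_word g : valid_word SX (normal_word g).
Proof.
  apply all_letters_app. split; [apply valid_transport, pres_wordP | apply valid_path].
Qed.

Lemma normal_word_step_of_local g a x V : valid_word T V ->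
  phi V = gmul (ginv (f1 g)) (f1 (gmul g x)) ->
  E (return_path g ++ [(a, true)]) (transport (f1 g) V ++ return_path (gmul g x)) ->
  E (normal_word g ++ [(a, true)]) (normal_word (gmul g x)).
Proof.
  intros HV Hp HE. unfold normal_word.
  destruct (pres_wordP (gmul (ginv (f1 gone)) (f1 g))) as [W1 W2].
  destruct (pres_wordP (gmul (ginv (f1 gone)) (f1 (gmul g x)))) as [W1' W2'].
  rewrite <- app_assoc. eapply cq_trans; [apply conseq_catl, HE|].
  rewrite app_assoc. apply conseq_catr.
  set (P := pres_word (gmul (ginv (f1 gone)) (f1 g))) in *.
  replace (f1 g) with (gmul (f1 gone) (phi P)) by (rewrite W2; now gsimpl).
  rewrite <- transport_cat.
  apply transport_phi_eq; [now apply all_letters_app | exact W1'|].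
  rewrite phi_app, W2, W2', Hp. now gsimpl.
Qed.

Lemma local_step_gen g s : In s SX ->
  E (return_path g ++ [(LS s, true)])
    (transport (f1 g) (lift_path (f1 g) (f1 (gmul g s))) ++ return_path (gmul g s)).
Proof.
  intro Hs. apply short_eq with (C + 1) ((L * 1 + C) * m * letter_cost + C).
  - apply short_cat; [apply short_return_path|].
    apply (short_gen_word _ (l := [(s, true)])); [|auto].
    intros y b [E1|[]]. now injection E1 as <- _.
  - apply short_cat; [|apply short_return_path]. apply short_transport_lift_path.
    apply (lipschitz_dist Hf), (dist_le_step g true (word_len_le_gen true Hs)).
  - unfold K. lia.
  - rewrite !phi_app, phi_transport, (proj2 (lift_pathP _ _)); unfold return_path.
    rewrite !phi_path; simpl. now gsimpl.
Qed.

Lemma retract_image_coset c z : valid_coset c -> gp_sub Y (fst (f2 c)) z ->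
  same_coset (r2 (fst (f2 c), gmul (snd (f2 c)) z)) c.
Proof.
  intros Hc. pose proof (Hret2 Hc) as H1. pose proof (lipschitz_coset_valid Hf Hc) as Hv.
  revert H1 Hv. destruct (f2 c) as [j h]; simpl. intros H1 Hv Hz.
  pose proof (lipschitz_same_coset Hr Hv (same_coset_step h Hz)) as H2.
  apply same_coset_trans with (r2 (j, h)); [exact (r2_valid (c := (j, gmul h z)) Hv)| |exact H1].
  apply same_coset_sym, H2. exact (r2_valid Hv).
Qed.

Lemma transport_through_letter U j x V y :
  transport y (U ++ [(LP j x, true)] ++ V) =
  (transport y U ++ anchor (gmul y (phi U)) j) ++
  [(LP (fst (r2 (j, gmul y (phi U)))) (shadow_step (j, gmul y (phi U)) x), true)] ++
  (path (shadow (j, gmul y (phi U)) x) (r1 (gmul (gmul y (phi U)) x)) ++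
   transport (gmul (gmul y (phi U)) x) V).
Proof. rewrite transport_cat; simpl. now rewrite <- !app_assoc. Qed.

Lemma local_step_through_coset g i p j y x : i < gp_n X -> gp_sub X i p ->
  j < gp_n Y -> gp_sub Y j x -> same_coset (r2 (j, y)) (i, g) ->
  dist_lt SY (f1 g) y M -> dist_lt SY (f1 (gmul g p)) (gmul y x) M ->
  E (return_path g ++ [(LP i p, true)])
    (transport (f1 g)
       (lift_path (f1 g) y ++ [(LP j x, true)] ++ lift_path (gmul y x) (f1 (gmul g p))) ++
     return_path (gmul g p)).
Proof.
  intros Hi Hp Hj Hx [Hk Hsub] Hd0 Hd1. cbn [fst snd] in Hk, Hsub.
  destruct (lift_pathP (f1 g) y) as [_ HpV1].
  destruct (lift_pathP (gmul y x) (f1 (gmul g p))) as [_ HpV2].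
  destruct (shadowP (c := (j, y)) Hj (gp_sub1 Hj)) as [Ho Hda]. rewrite Hk in Ho.
  destruct (shadowP (c := (j, y)) Hj Hx) as [_ Hdb]. cbn [snd] in Hda, Hdb. rewrite gmul_1r in Hda.
  rewrite transport_through_letter, HpV1, mulKV, Hk, <- (app_nil_r [(LP i p, true)]), <- !app_assoc.
  set (A' := transport (f1 g) (lift_path (f1 g) y) ++ anchor y j).
  set (B' := path (shadow (j, y) x) (r1 (gmul y x)) ++
    transport (gmul y x) (lift_path (gmul y x) (f1 (gmul g p))) ++ return_path (gmul g p)).
  replace (transport (f1 g) (lift_path (f1 g) y) ++ anchor y j ++ _) with
    (A' ++ [(LP i (shadow_step (j, y) x), true)] ++ B')
    by (unfold A', B'; now rewrite <- !app_assoc).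
  assert (HA' : short SX K (M * m * letter_cost + M) A').
  { apply short_cat; [apply short_transport_lift_path | apply short_path]; now apply dist_lt_le. }
  assert (HB' : short SX K (M + (M * m * letter_cost + C)) B').
  { apply short_cat; [apply short_path, dist_le_sym, dist_lt_le, Hdb|].
    apply short_cat; [|apply short_return_path].
    apply short_transport_lift_path, dist_le_sym, dist_lt_le, Hd1. }
  apply short_sandwich with (M * m * letter_cost + M + C); auto;
    [eapply short_mono; [apply short_return_path | lia] | eapply short_mono; [apply short_nil | lia]
    | eapply short_mono; [exact HA' | lia] | eapply short_mono; [exact HB' | lia] | ..].
  - unfold K. lia.
  - rewrite <- Hk. exact (shadow_step_sub (c := (j, y)) Hj Hx).
  - unfold A', anchor, return_path, shadow.
    rewrite !phi_app, phi_transport, HpV1, !phi_path, mulKV. gsimpl. rewrite gmul_assoc.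
    apply (gp_subM Hi); [|exact Ho]. rewrite Hk in Hsub. apply (gp_subV Hi) in Hsub.
    now rewrite ginv_mul, ginv_ginv in Hsub.
  - unfold A', B', anchor, return_path, shadow_step, shadow.
    rewrite !phi_app, !phi_transport, HpV1, HpV2, !phi_path, !mulKV; simpl. now gsimpl.
Qed.

Lemma local_step_parabolic g i p : i < gp_n X -> gp_sub X i p ->
  exists V, valid_word T V /\ phi V = gmul (ginv (f1 g)) (f1 (gmul g p)) /\
    E (return_path g ++ [(LP i p, true)]) (transport (f1 g) V ++ return_path (gmul g p)).
Proof.
  intros Hi Hp. assert (Hc : valid_coset (X := X) (i, g)) by exact Hi.
  destruct (lipschitz_near_coset Hf Hc (gp_sub1 Hi)) as (q0 & Hq0 & Hd0).
  destruct (lipschitz_near_coset Hf Hc Hp) as (q1 & Hq1 & Hd1).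
  pose proof (retract_image_coset Hc Hq0) as Hcoset. assert (Hj := lipschitz_coset_valid Hf Hc).
  destruct (f2 (i, g)) as [j h]; cbn [fst snd] in *. rewrite gmul_1r in Hd0.
  set (x := gmul (ginv q0) q1). replace (gmul h q1) with (gmul (gmul h q0) x) in Hd1
    by (unfold x; now gsimpl).
  destruct (lift_pathP (f1 g) (gmul h q0)) as [HV1 HpV1].
  destruct (lift_pathP (gmul (gmul h q0) x) (f1 (gmul g p))) as [HV2 HpV2].
  exists (lift_path (f1 g) (gmul h q0) ++ [(LP j x, true)] ++
    lift_path (gmul (gmul h q0) x) (f1 (gmul g p))).
  assert (Hx : gp_sub Y j x) by now apply gp_sub_divl.
  split; [|split; [|now apply local_step_through_coset]].
  - apply all_letters_app; split; [exact HV1|]. apply all_letters_cons; [|exact HV2].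
    now split.
  - rewrite !phi_app, HpV1, HpV2; simpl. now gsimpl.
Qed.

Lemma local_step g a : valid_letter SX a ->
  exists V, valid_word T V /\ phi V = gmul (ginv (f1 g)) (f1 (gmul g (letter_val a))) /\
    E (return_path g ++ [(a, true)]) (transport (f1 g) V ++ return_path (gmul g (letter_val a))).
Proof.
  destruct a as [s|i p]; simpl.
  - intro Hs. exists (lift_path (f1 g) (f1 (gmul g s))).
    destruct (lift_pathP (f1 g) (f1 (gmul g s))) as [H1 H2]. auto using local_step_gen.
  - intros [Hi Hp]. now apply local_step_parabolic.
Qed.

Lemma normal_word_step g a b : valid_letter SX a ->
  E (normal_word g ++ [(a, b)]) (normal_word (gmul g (sgn_val (letter_val a) b))).
Proof.
  intro Ha.
  assert (Hstep : forall g, E (normal_word g ++ [(a, true)]) (normal_word (gmul g (letter_val a)))).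
  { intro g'. destruct (local_step g' Ha) as (V & HV & Hp & HE).
    exact (normal_word_step_of_local HV Hp HE). }
  destruct b; [apply Hstep|]. simpl.
  set (g' := gmul g (ginv (letter_val a))).
  replace (normal_word g) with (normal_word (gmul g' (letter_val a))) by (unfold g'; now gsimpl).
  eapply cq_trans; [apply conseq_catr, cq_sym, Hstep|].
  rewrite <- app_assoc. rewrite <- (app_nil_r (normal_word g')) at 2. apply conseq_catl.
  exact (cq_cancel _ [] [] true Ha).
Qed.

Lemma normal_word_cat w g : valid_word SX w ->
  E (normal_word g ++ w) (normal_word (gmul g (phi w))).
Proof.
  revert g; induction w as [|[a b] w IH]; intros g Hw; simpl.
  - rewrite app_nil_r, gmul_1r. apply cq_refl.
  - change ((a, b) :: w) with ([(a, b)] ++ w). rewrite app_assoc.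
    eapply cq_trans; [apply conseq_catr, normal_word_step; eapply Hw; left; eauto|].
    rewrite gmul_assoc. apply IH. intros a' b' H; eapply Hw; right; eauto.
Qed.

Lemma short_rel_complete w : valid_word SX w -> phi w = gone -> E w [].
Proof.
  intros Hw Hp. pose proof (normal_word_cat gone Hw) as H. rewrite Hp, gmul_1l in H.
  apply cq_trans with (inv_word (normal_word gone) ++ normal_word gone ++ w).
  - rewrite app_assoc, <- (app_nil_l w) at 1. apply conseq_catr, cq_sym.
    apply conseq_cancel_inv_word, valid_normal_word.
  - eapply cq_trans; [apply conseq_catl, H|]. apply conseq_cancel_inv_word, valid_normal_word.
Qed.

End Transport.

End Retraction.

Theorem theorem4p12 (X Y : GroupPair) :
  quasi_retract X Y -> rel_fin_presented Y -> rel_fin_presented X.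
Proof.
  intros (SX & SY & L & C & M & f1 & f2 & r1 & r2 & HSX & HSY & _ & Hf & Hr & Hret1 & Hret2)
    (T & RY & HY).
  destruct (presentation_bounded_exists HSY T RY) as [m Hm].
  apply (rel_fin_presented_of_short_relators (K := relator_bound L C M m) HSX).
  intros w Hw Hp. exact (short_rel_complete HSX HSY Hf Hr Hret1 Hret2 HY Hm Hw Hp).
Qed.
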